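(* In the setting described in the context, there is a constant $M_2>0$, independent of $\epsilon\in(0,1)$, such that for all $x\in\mathbb{R}$ and all $t\geq0$, $$|v^\epsilon(x,t)|\leq \frac{M_2}{\epsilon^\alpha},\qquad \Big|\frac{\partial}{\partial x}v^\epsilon(x,t)\Big|\leq \frac{M_2}{\epsilon^{2\alpha}}.$$
   Context: Let $\mathcal{C}_b(\mathbb{R})$ denote the Banach space of bounded continuous real functions on $\mathbb{R}$ with the sup norm. For a real function $u$ set $u^+=\max(0,u)$, $u^-=\max(0,-u)$. For $0<\epsilon<1$ let $u^\epsilon:\mathbb{R}\times[0,\infty)\to\mathbb{R}$ be $2\pi$-periodic in $x$, with $t\mapsto u^\epsilon(\cdot,t)$ continuous from $[0,\infty)$ into $\mathcal{C}_b(\mathbb{R})$, and assume there is $M_1>0$ with $|u^\epsilon(x,t)|\leq M_1$ for all $\epsilon,x,t\ge0$. Let $v_0^\epsilon\in\mathcal{C}_b(\mathbb{R})$ be $2\pi$-periodic with $\sup_{\epsilon}\int_{-\pi}^{\pi}|v_0^\epsilon|dx<\infty$. Let $X^\epsilon$ be the unique global $\mathcal{C}^1$ solution $[0,\infty)\to\mathcal{C}_b(\mathbb{R})$ of $$\frac{d}{dt}X^\epsilon(x,t)=\frac{1}{\epsilon}\big[X^\epsilon(x-\epsilon,t)u^{\epsilon+}(x-\epsilon,t)-X^\epsilon(x,t)|u^{\epsilon}(x,t)|+X^\epsilon(x+\epsilon,t)u^{\epsilon-}(x+\epsilon,t)\big],\quad X^\epsilon(x,0)=v_0^\epsilon(x).$$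 Let $\phi\in\mathcal{C}^\infty(\mathbb{R})$ have compact support with $\int\phi=1$, let $\alpha\in]0,1]$, $\phi_{\epsilon^\alpha}(x)=\epsilon^{-\alpha}\phi(x/\epsilon^\alpha)$, and define $v^\epsilon(x,t)=(X^\epsilon(\cdot,t)*\phi_{\epsilon^\alpha})(x)$. *)

From Stdlib Require Import Reals.
From Coquelicot Require Export Coquelicot.
Open Scope R_scope.

Definition Cb (f : R -> R) : Prop :=
  (forall x, continuous f x) /\ exists B, forall x, Rabs (f x) <= B.

Definition periodic2pi (f : R -> R) : Prop := forall x, f (x + 2 * PI) = f x.

(* t |-> w(.,t) is continuous from [0,oo) into C_b(R) (sup norm) *)
Definition sup_cont_Cb (w : R -> R -> R) : Prop :=
  (forall t, 0 <= t -> Cb (fun x => w x t)) /\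
  forall t, 0 <= t -> forall eta, 0 < eta -> exists delta, 0 < delta /\
    forall s, 0 <= s -> Rabs (s - t) < delta ->
      forall x, Rabs (w x s - w x t) <= eta.

(* t |-> w(.,t) is differentiable from [0,oo) into C_b(R) (sup norm),
   with derivative t |-> dw(.,t) (one-sided at t = 0) *)
Definition sup_derivative (w dw : R -> R -> R) : Prop :=
  forall t, 0 <= t -> forall eta, 0 < eta -> exists delta, 0 < delta /\
    forall s, 0 <= s -> s <> t -> Rabs (s - t) < delta ->
      forall x, Rabs ((w x s - w x t) / (s - t) - dw x t) <= eta.

Definition upos (a : R) : R := Rmax 0 a.
Definition uneg (a : R) : R := Rmax 0 (- a).

Definition rhs (eps : R) (X u : R -> R -> R) (x t : R) : R :=
  / eps * (X (x - eps) t * upos (u (x - eps) t)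
           - X x t * Rabs (u x t)
           + X (x + eps) t * uneg (u (x + eps) t)).

Definition smooth (phi : R -> R) : Prop := forall n x, ex_derive_n phi n x.

Definition mollif (phi : R -> R) (delta : R) (x : R) : R := / delta * phi (x / delta).

Definition conv (f g : R -> R) (x : R) : R :=
  RInt_gen (fun y => f y * g (x - y)) (Rbar_locally m_infty) (Rbar_locally p_infty).

From Stdlib Require Import Reals Lra Classical.
From Coquelicot Require Import Coquelicot.
Open Scope R_scope.

(* The lattice equation is linear with 2π-periodic coefficients, so the defect
   [X (x + 2π) t - X x t] solves it with zero initial data; on time steps of length
   [eps / (6 M1)] its sup norm cannot leave 0, hence every [X (., t)] is 2π-periodic.
   The Euler step of the equation is a combination of neighbouring values with nonnegative
   weights, and the resulting transport terms integrate to zero over a period: the L1 norm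
   over a period never increases and stays below the bound on the initial data.  With
   [d = eps^alpha <= 1], the kernels [phi_d] and [phi_d'] are supported in a fixed window,
   bounded by [sup|phi| / d] and [sup|phi'| / d^2], and the window is covered by finitely
   many periods. *)

Lemma continuous_Rplus (f g : R -> R) x :
  continuous f x -> continuous g x -> continuous (fun y => f y + g y) x.
Proof. exact (@continuous_plus R_UniformSpace R_AbsRing R_NormedModule f g x). Qed.

Lemma continuous_Rminus (f g : R -> R) x :
  continuous f x -> continuous g x -> continuous (fun y => f y - g y) x.
Proof. exact (@continuous_minus R_UniformSpace R_AbsRing R_NormedModule f g x). Qed.

Lemma continuous_Rmult (f g : R -> R) x :
  continuous f x -> continuous g x -> continuous (fun y => f y * g y) x.
Proof. exact (@continuous_mult R_UniformSpace R_AbsRing f g x). Qed.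

Lemma continuous_Rcomp (f g : R -> R) x :
  continuous f x -> (forall y, continuous g y) -> continuous (fun y => g (f y)) x.
Proof. intros Hf Hg. exact (continuous_comp f g x Hf (Hg (f x))). Qed.

Lemma continuous_upos (f : R -> R) x :
  continuous f x -> continuous (fun y => upos (f y)) x.
Proof.
  intros Hf. apply (continuous_ext (fun y => / 2 * (f y + Rabs (f y)))).
  - intros y. unfold upos, Rmax, Rabs.
    destruct (Rle_dec 0 (f y)); destruct (Rcase_abs (f y)); lra.
  - apply continuous_Rmult; [apply continuous_const|].
    apply continuous_Rplus; [exact Hf | apply continuous_Rabs_comp, Hf].
Qed.

Lemma continuous_uneg (f : R -> R) x :
  continuous f x -> continuous (fun y => uneg (f y)) x.
Proof.
  intros Hf. apply (continuous_ext (fun y => / 2 * (Rabs (f y) - f y))).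
  - intros y. unfold uneg, Rmax, Rabs.
    destruct (Rle_dec 0 (- f y)); destruct (Rcase_abs (f y)); lra.
  - apply continuous_Rmult; [apply continuous_const|].
    apply continuous_Rminus; [apply continuous_Rabs_comp, Hf | exact Hf].
Qed.

Ltac solve_continuous :=
  repeat match goal with
  | H : forall y, continuous ?g y |- continuous ?g _ => apply H
  | |- continuous (fun _ => _) _ => apply continuous_const
  | |- continuous (fun y => y) _ => apply continuous_id
  | |- continuous (fun y => Rabs _) _ => apply continuous_Rabs_comp
  | |- continuous (fun y => upos _) _ => apply continuous_upos
  | |- continuous (fun y => uneg _) _ => apply continuous_uneg
  | |- continuous (fun y => _ - _) _ => apply continuous_Rminus
  | |- continuous (fun y => _ + _) _ => apply continuous_Rplus
  | |- continuous (fun y => _ * _) _ => apply continuous_Rmult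
  | |- continuous (Rminus ?c) _ => apply (continuous_Rminus (fun _ => c) (fun y => y))
  | |- continuous (Rplus ?c) _ => apply (continuous_Rplus (fun _ => c) (fun y => y))
  | |- continuous (Rmult ?c) _ => apply (continuous_Rmult (fun _ => c) (fun y => y))
  | H : forall y, continuous ?g y |- continuous (fun y => ?g _) _ =>
      apply (continuous_Rcomp _ g _); [| exact H]
  end.

Lemma ex_RInt_cont (f : R -> R) (a b : R) : (forall x, continuous f x) -> ex_RInt f a b.
Proof. intros Hf. apply (@ex_RInt_continuous R_CompleteNormedModule). intros; apply Hf. Qed.

Lemma continuous_of_ex_derive (f : R -> R) x : ex_derive f x -> continuous f x.
Proof. exact (@ex_derive_continuous R_AbsRing R_NormedModule f x). Qed.

Lemma continuity_pt_of_continuous (f : R -> R) x : continuous f x -> continuity_pt f x.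
Proof. apply continuity_pt_filterlim. Qed.

Lemma bounded_of_compact_support (f : R -> R) (S : R) :
  0 <= S -> (forall y, continuous f y) -> (forall y, S < Rabs y -> f y = 0) ->
  exists B, forall y, Rabs (f y) <= B.
Proof.
  intros hS Hf Hsupp.
  destruct (continuity_ab_maj (fun y => Rabs (f y)) (- S) S) as [m [Hm _]]; [lra| |].
  { intros c _. apply continuity_pt_of_continuous. solve_continuous. }
  exists (Rabs (f m)). intros y.
  destruct (Rle_or_lt (Rabs y) S) as [hy | hy].
  - apply Hm. unfold Rabs in hy. destruct (Rcase_abs y); lra.
  - rewrite (Hsupp y hy), Rabs_R0. apply Rabs_pos.
Qed.

(** * Continuous induction *)

Lemma Rabs_eq0_of_le_eps (y c : R) : (forall eta, 0 < eta -> Rabs y <= eta * c) -> y = 0.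
Proof.
  intros Hy. destruct (Req_dec y 0) as [e | ne]; [exact e | exfalso].
  pose proof (Rabs_pos_lt y ne).
  assert (Rabs y <= 0); [|lra].
  apply Rle_plus_epsilon. intros g hg. rewrite Rplus_0_l.
  assert (hc : 0 < Rabs c + 1) by (pose proof (Rabs_pos c); lra).
  eapply Rle_trans; [apply (Hy (g / (Rabs c + 1))); apply Rdiv_lt_0_compat; lra|].
  apply Rle_trans with (g / (Rabs c + 1) * (Rabs c + 1)); [| right; field; lra].
  apply Rmult_le_compat_l; [apply Rlt_le, Rdiv_lt_0_compat; lra|].
  pose proof (Rle_abs c). lra.
Qed.

Lemma continuous_induction (a b : R) (G : R -> Prop) :
  a <= b -> G a ->
  (forall t, a < t <= b -> (forall r, a <= r < t -> G r) -> G t) ->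
  (forall t, a <= t < b -> G t ->
     exists d, 0 < d /\ forall s, t < s < t + d -> s <= b -> G s) ->
  forall t, a <= t <= b -> G t.
Proof.
  intros hab Ga Hleft Hright.
  set (E := fun s => a <= s <= b /\ forall r, a <= r <= s -> G r).
  assert (Ea : E a) by (split; [lra | intros r Hr; replace r with a by lra; exact Ga]).
  destruct (completeness E) as [m [Hub Hlub]].
  { exists b. intros s [Hs _]. lra. }
  { exists a. exact Ea. }
  assert (am : a <= m) by (apply Hub, Ea).
  assert (mb : m <= b) by (apply Hlub; intros s [Hs _]; lra).
  assert (Gbelow : forall r, a <= r < m -> G r).
  { intros r Hr. destruct (classic (exists s, E s /\ r < s)) as [[s [[_ Hs] Hrs]] | Hn].
    - apply Hs. lra.
    - exfalso. assert (m <= r); [|lra]. apply Hlub. intros s Es.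
      apply Rnot_lt_le. intros Hrs. apply Hn. exists s. split; assumption. }
  assert (Gm : G m).
  { destruct (Req_dec m a) as [-> | ne]; [exact Ga | apply Hleft; [lra | exact Gbelow]]. }
  assert (m = b) as <-.
  { destruct (Req_dec m b) as [e | ne]; [exact e|]. exfalso.
    destruct (Hright m ltac:(lra) Gm) as [d [hd Hd]].
    set (s := m + Rmin d (b - m) / 2).
    assert (Rmin d (b - m) <= d) by apply Rmin_l.
    assert (Rmin d (b - m) <= b - m) by apply Rmin_r.
    assert (0 < Rmin d (b - m)) by (apply Rmin_pos; lra).
    assert (Es : E s).
    { split; [unfold s; lra|]. intros r Hr.
      destruct (Rlt_or_le r m) as [h | h]; [apply Gbelow; lra|].
      destruct (Req_dec r m) as [-> | ne2]; [exact Gm|].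
      apply Hd; unfold s in Hr; lra. }
    pose proof (Hub s Es). unfold s in *. lra. }
  intros t Ht. destruct (Req_dec t m) as [-> | ne]; [exact Gm | apply Gbelow; lra].
Qed.

Lemma exists_near_left (a t delta : R) : a < t -> 0 < delta ->
  exists r, a <= r < t /\ Rabs (r - t) < delta.
Proof.
  intros hat hd. exists (t - Rmin delta (t - a) / 2).
  assert (Rmin delta (t - a) <= delta) by apply Rmin_l.
  assert (Rmin delta (t - a) <= t - a) by apply Rmin_r.
  assert (0 < Rmin delta (t - a)) by (apply Rmin_pos; lra).
  split; [lra|]. rewrite Rabs_left; lra.
Qed.

(* A Dini-derivative criterion for monotonicity. *)
Lemma le_of_right_slopes (N : R -> R) (c : R) :
  N 0 <= c ->
  (forall t, 0 < t -> forall g, 0 < g -> exists delta, 0 < delta /\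
     forall r, 0 <= r < t -> Rabs (r - t) < delta -> N t <= N r + g) ->
  (forall t, 0 <= t -> forall eta, 0 < eta -> exists d, 0 < d /\
     forall s, t < s < t + d -> N s <= N t + eta * (s - t)) ->
  forall t, 0 <= t -> N t <= c.
Proof.
  intros N0 Hleft Hright T HT.
  assert (Hslow : forall eta, 0 < eta -> forall t, 0 <= t <= T -> N t <= c + eta * t).
  { intros eta heta. apply continuous_induction; [lra | lra | |].
    - intros t Ht Hbelow. apply Rle_plus_epsilon. intros g hg.
      destruct (Hleft t ltac:(lra) g hg) as [delta [hdelta Hdelta]].
      destruct (exists_near_left 0 t delta) as [r [Hr Hrt]]; [lra | exact hdelta|].
      pose proof (Hbelow r Hr). pose proof (Hdelta r Hr Hrt).
      assert (eta * r <= eta * t) by (apply Rmult_le_compat_l; lra). lra.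
    - intros t Ht Gt. destruct (Hright t ltac:(lra) eta heta) as [d [hd Hd]].
      exists d. split; [exact hd|]. intros s Hs _. pose proof (Hd s Hs).
      replace (c + eta * s) with (c + eta * t + eta * (s - t)) by ring. lra. }
  apply Rle_plus_epsilon. intros g hg.
  assert (hT1 : 0 < T + 1) by lra.
  pose proof (Hslow (g / (T + 1)) ltac:(apply Rdiv_lt_0_compat; lra) T ltac:(lra)).
  assert (g / (T + 1) * T <= g); [|lra].
  apply Rle_trans with (g / (T + 1) * (T + 1)); [| right; field; lra].
  apply Rmult_le_compat_l; [apply Rlt_le, Rdiv_lt_0_compat |]; lra.
Qed.

(** * Uniqueness and periodicity for the lattice equation *)

Definition sup_continuous (w : R -> R -> R) : Prop :=
  forall t, 0 <= t -> forall eta, 0 < eta -> exists delta, 0 < delta /\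
    forall s, 0 <= s -> Rabs (s - t) < delta -> forall x, Rabs (w x s - w x t) <= eta.

Lemma abs_le_euler_step (w0 w1 dw h e : R) : 0 < h ->
  Rabs ((w1 - w0) / h - dw) <= e -> Rabs w1 <= Rabs (w0 + h * dw) + h * e.
Proof.
  intros hh He.
  replace w1 with ((w0 + h * dw) + h * ((w1 - w0) / h - dw)) by (field; lra).
  eapply Rle_trans; [apply Rabs_triang|].
  rewrite Rabs_mult, (Rabs_pos_eq h) by lra.
  apply Rplus_le_compat_l, Rmult_le_compat_l; lra.
Qed.

Lemma sup_derivative_euler (w dw : R -> R -> R) (t eta : R) :
  sup_derivative w dw -> 0 <= t -> 0 < eta ->
  exists d, 0 < d /\ forall s, t < s < t + d -> forall x,
    Rabs (w x s) <= Rabs (w x t + (s - t) * dw x t) + (s - t) * eta.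
Proof.
  intros Hw ht heta. destruct (Hw t ht eta heta) as [d [hd Hd]].
  exists d. split; [exact hd|]. intros s Hs x.
  apply abs_le_euler_step; [lra|]. apply Hd; [lra | lra | rewrite Rabs_pos_eq; lra].
Qed.

Lemma sup_derivative_ext (w dw dw' : R -> R -> R) :
  (forall x t, 0 <= t -> dw x t = dw' x t) -> sup_derivative w dw -> sup_derivative w dw'.
Proof.
  intros E Hw t ht eta heta. destruct (Hw t ht eta heta) as [d [hd Hd]].
  exists d. split; [exact hd|]. intros s hs hst hd' x. rewrite <- E by exact ht. auto.
Qed.

Lemma sup_derivative_shift_sub (w dw : R -> R -> R) (c : R) :
  sup_derivative w dw ->
  sup_derivative (fun x t => w (x + c) t - w x t) (fun x t => dw (x + c) t - dw x t).
Proof.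
  intros Hw t ht eta heta. destruct (Hw t ht (eta / 2) ltac:(lra)) as [d [hd Hd]].
  exists d. split; [exact hd|]. intros s hs hst hsd x.
  assert (hst0 : s - t <> 0) by lra.
  replace ((w (x + c) s - w x s - (w (x + c) t - w x t)) / (s - t) - (dw (x + c) t - dw x t))
    with (((w (x + c) s - w (x + c) t) / (s - t) - dw (x + c) t)
          - ((w x s - w x t) / (s - t) - dw x t)) by (field; exact hst0).
  eapply Rle_trans; [apply Rabs_triang|]. rewrite Rabs_Ropp.
  pose proof (Hd s hs hst hsd (x + c)). pose proof (Hd s hs hst hsd x). lra.
Qed.

Lemma sup_continuous_shift_sub (w : R -> R -> R) (c : R) :
  sup_continuous w -> sup_continuous (fun x t => w (x + c) t - w x t).
Proof.
  intros Hw t ht eta heta. destruct (Hw t ht (eta / 2) ltac:(lra)) as [d [hd Hd]].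
  exists d. split; [exact hd|]. intros s hs hst x.
  replace (w (x + c) s - w x s - (w (x + c) t - w x t))
    with ((w (x + c) s - w (x + c) t) - (w x s - w x t)) by ring.
  eapply Rle_trans; [apply Rabs_triang|]. rewrite Rabs_Ropp.
  pose proof (Hd s hs hst (x + c)). pose proof (Hd s hs hst x). lra.
Qed.

Lemma upos_bounds (p : R) : 0 <= upos p <= Rabs p.
Proof. unfold upos, Rmax, Rabs. destruct (Rle_dec 0 p); destruct (Rcase_abs p); lra. Qed.

Lemma uneg_bounds (p : R) : 0 <= uneg p <= Rabs p.
Proof. unfold uneg, Rmax, Rabs. destruct (Rle_dec 0 (- p)); destruct (Rcase_abs p); lra. Qed.

Lemma upos_add_uneg (p : R) : upos p + uneg p = Rabs p.
Proof.
  unfold upos, uneg, Rmax, Rabs.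
  destruct (Rle_dec 0 p); destruct (Rle_dec 0 (- p)); destruct (Rcase_abs p); lra.
Qed.

Lemma rhs_abs_le (eps M c : R) (W u : R -> R -> R) (t x : R) : 0 < eps ->
  (forall y, Rabs (u y t) <= M) -> (forall y, Rabs (W y t) <= c) ->
  Rabs (rhs eps W u x t) <= 3 * M * c / eps.
Proof.
  intros heps Hu HW. unfold rhs, Rdiv.
  rewrite Rabs_mult, Rabs_pos_eq, Rmult_comm by (apply Rlt_le, Rinv_0_lt_compat, heps).
  apply Rmult_le_compat_r; [apply Rlt_le, Rinv_0_lt_compat, heps|].
  eapply Rle_trans; [apply Rabs_triang|].
  eapply Rle_trans; [apply Rplus_le_compat_r, Rabs_triang|].
  rewrite Rabs_Ropp, !Rabs_mult, Rabs_Rabsolu.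
  pose proof (upos_bounds (u (x - eps) t)). pose proof (uneg_bounds (u (x + eps) t)).
  rewrite (Rabs_pos_eq (upos _)), (Rabs_pos_eq (uneg _)) by lra.
  pose proof (Hu (x - eps)). pose proof (Hu x). pose proof (Hu (x + eps)).
  pose proof (HW (x - eps)). pose proof (HW x). pose proof (HW (x + eps)).
  assert (Rabs (W (x - eps) t) * upos (u (x - eps) t) <= c * M)
    by (apply Rmult_le_compat; try apply Rabs_pos; lra).
  assert (Rabs (W x t) * Rabs (u x t) <= c * M)
    by (apply Rmult_le_compat; try apply Rabs_pos; lra).
  assert (Rabs (W (x + eps) t) * uneg (u (x + eps) t) <= c * M)
    by (apply Rmult_le_compat; try apply Rabs_pos; lra).
  lra.
Qed.

Section LatticeUniqueness.

Variables (eps M1 : R) (u W : R -> R -> R).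
Hypotheses (heps : 0 < eps) (hM1 : 0 < M1)
  (Hu : forall x t, 0 <= t -> Rabs (u x t) <= M1)
  (HWc : sup_continuous W) (HWd : sup_derivative W (rhs eps W u)).

(* On a time step of length [eps / (6 M1)], a bound [|W| <= 2 eta (t - a)] makes the
   right-hand side at most [eta], so the bound propagates to the right. *)
Lemma lattice_zero_step (a : R) : 0 <= a -> (forall x, W x a = 0) ->
  forall t, a <= t <= a + eps / (6 * M1) -> forall x, W x t = 0.
Proof.
  intros ha Wa. set (T := eps / (6 * M1)).
  assert (hT : 0 < T) by (apply Rdiv_lt_0_compat; lra).
  assert (Hslow : forall eta, 0 < eta -> forall t, a <= t <= a + T ->
            forall x, Rabs (W x t) <= 2 * eta * (t - a)).
  { intros eta heta.
    apply (continuous_induction a (a + T) (fun t => forall x, Rabs (W x t) <= 2 * eta * (t - a)));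
      [lra | | |].
    - intros x. rewrite Wa, Rabs_R0. lra.
    - intros t Ht Hbelow x. apply Rle_plus_epsilon. intros g hg.
      destruct (HWc t ltac:(lra) g hg) as [delta [hdelta Hdelta]].
      destruct (exists_near_left a t delta) as [r [Hr Hrt]]; [lra | exact hdelta|].
      pose proof (Hbelow r Hr x). pose proof (Hdelta r ltac:(lra) Hrt x).
      assert (Htri := Rabs_triang_inv (W x t) (W x r)). rewrite Rabs_minus_sym in Htri.
      assert (eta * r <= eta * t) by (apply Rmult_le_compat_l; lra). lra.
    - intros t Ht Gt.
      destruct (sup_derivative_euler W _ t eta HWd ltac:(lra) heta) as [d [hd Hd]].
      exists d. split; [exact hd|]. intros s Hs _ x.
      assert (Hrhs : Rabs (rhs eps W u x t) <= eta).
      { eapply Rle_trans; [apply (rhs_abs_le eps M1 (2 * eta * (t - a)));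
                           [exact heps | intros; apply Hu; lra | exact Gt]|].
        replace eta with (3 * M1 * (2 * eta * T) / eps) at 2 by (unfold T; field; lra).
        apply Rmult_le_compat_r; [apply Rlt_le, Rinv_0_lt_compat, heps|].
        apply Rmult_le_compat_l; [lra|]. apply Rmult_le_compat_l; lra. }
      assert (Hincr := Rabs_triang (W x t) ((s - t) * rhs eps W u x t)).
      rewrite Rabs_mult, (Rabs_pos_eq (s - t)) in Hincr by lra.
      assert ((s - t) * Rabs (rhs eps W u x t) <= (s - t) * eta)
        by (apply Rmult_le_compat_l; lra).
      pose proof (Hd s Hs x). pose proof (Gt x). lra. }
  intros t Ht x. apply (Rabs_eq0_of_le_eps _ (2 * T)). intros eta heta.
  pose proof (Hslow eta heta t Ht x).
  assert (2 * eta * (t - a) <= 2 * eta * T) by (apply Rmult_le_compat_l; lra). lra.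
Qed.

Lemma lattice_zero : (forall x, W x 0 = 0) -> forall t, 0 <= t -> forall x, W x t = 0.
Proof.
  intros W0. set (T := eps / (6 * M1)).
  assert (hT : 0 < T) by (apply Rdiv_lt_0_compat; lra).
  assert (Hsteps : forall n : nat, forall t, 0 <= t <= INR n * T -> forall x, W x t = 0).
  { induction n as [|n IH]; intros t Ht x.
    - simpl in Ht. replace t with 0 by lra. apply W0.
    - rewrite S_INR in Ht. pose proof (pos_INR n).
      destruct (Rle_or_lt t (INR n * T)) as [h | h]; [apply IH; lra|].
      apply (lattice_zero_step (INR n * T)); [nra | | fold T; lra].
      apply IH. nra. }
  intros t Ht x. destruct (INR_archimed T t hT) as [n Hn]. apply (Hsteps n). lra.
Qed.

End LatticeUniqueness.

Lemma rhs_shift_sub (eps c : R) (X u : R -> R -> R) (x t : R) :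
  (forall y, u (y + c) t = u y t) ->
  rhs eps X u (x + c) t - rhs eps X u x t
  = rhs eps (fun y s => X (y + c) s - X y s) u x t.
Proof.
  intros Hu. unfold rhs.
  replace (x + c - eps) with (x - eps + c) by ring.
  replace (x + c + eps) with (x + eps + c) by ring.
  rewrite !Hu. ring.
Qed.

Lemma solution_periodic (eps M1 : R) (u X : R -> R -> R) :
  0 < eps -> 0 < M1 ->
  (forall t, 0 <= t -> periodic2pi (fun x => u x t)) ->
  (forall x t, 0 <= t -> Rabs (u x t) <= M1) ->
  sup_continuous X -> sup_derivative X (rhs eps X u) ->
  periodic2pi (fun x => X x 0) ->
  forall t, 0 <= t -> periodic2pi (fun x => X x t).
Proof.
  intros heps hM1 Hper Hu HXc HXd HX0 t ht x. apply Rminus_diag_uniq.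
  apply (lattice_zero eps M1 u (fun y s => X (y + 2 * PI) s - X y s)); auto.
  - apply sup_continuous_shift_sub, HXc.
  - apply (sup_derivative_ext _ (fun y s => rhs eps X u (y + 2 * PI) s - rhs eps X u y s)).
    + intros y s hs. apply rhs_shift_sub, Hper, hs.
    + apply sup_derivative_shift_sub, HXd.
  - intros y. rewrite (HX0 y). ring.
Qed.

Section PeriodicIntegrals.

Variable f : R -> R.
Hypotheses (Hf : forall x, continuous f x) (Hper : periodic2pi f).

Let Chasles (p q r : R) : RInt f p q + RInt f q r = RInt f p r.
Proof. apply (@RInt_Chasles R_CompleteNormedModule); apply ex_RInt_cont, Hf. Qed.

Lemma RInt_translate_period (a b : R) : RInt f (a + 2 * PI) (b + 2 * PI) = RInt f a b.
Proof.
  replace (a + 2 * PI) with (1 * a + 2 * PI) by ring.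
  replace (b + 2 * PI) with (1 * b + 2 * PI) by ring.
  rewrite <- RInt_comp_lin by (apply ex_RInt_cont, Hf).
  apply RInt_ext. intros x _. change (1 * f (1 * x + 2 * PI) = f x).
  rewrite !Rmult_1_l. apply Hper.
Qed.

Lemma RInt_one_period (a : R) : RInt f a (a + 2 * PI) = RInt f (- PI) PI.
Proof.
  rewrite <- (Chasles a (- PI) (a + 2 * PI)), <- (Chasles (- PI) PI (a + 2 * PI)).
  assert (E : RInt f PI (a + 2 * PI) = RInt f (- PI) a).
  { rewrite <- (RInt_translate_period (- PI) a). f_equal. ring. }
  assert (S : RInt f a (- PI) = - RInt f (- PI) a).
  { symmetry. apply (opp_RInt_swap f). apply ex_RInt_cont, Hf. }
  rewrite E, S. lra.
Qed.

Lemma RInt_comp_shift (c : R) : RInt (fun x => f (x + c)) (- PI) PI = RInt f (- PI) PI.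
Proof.
  rewrite <- (RInt_one_period (- PI + c)).
  replace (- PI + c + 2 * PI) with (1 * PI + c) by ring.
  replace (- PI + c) with (1 * - PI + c) by ring.
  rewrite <- RInt_comp_lin by (apply ex_RInt_cont, Hf).
  apply RInt_ext. intros x _. change (f (x + c) = 1 * f (1 * x + c)).
  rewrite !Rmult_1_l. reflexivity.
Qed.

Lemma RInt_periods (N : nat) (c : R) :
  RInt f c (c + 2 * PI * INR N) = INR N * RInt f (- PI) PI.
Proof.
  induction N as [|N IH].
  - simpl. rewrite Rmult_0_r, Rplus_0_r, RInt_point. exact (eq_sym (Rmult_0_l _)).
  - rewrite <- (Chasles c (c + 2 * PI * INR N)), IH, S_INR.
    rewrite <- (RInt_one_period (c + 2 * PI * INR N)).
    replace (c + 2 * PI * INR N + 2 * PI) with (c + 2 * PI * (INR N + 1)) by ring.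
    rewrite Rmult_plus_distr_r, Rmult_1_l. reflexivity.
Qed.

End PeriodicIntegrals.

Lemma RInt_le_superinterval (f : R -> R) (a A B b : R) :
  (forall x, continuous f x) -> (forall x, 0 <= f x) ->
  a <= A -> A <= B -> B <= b -> RInt f A B <= RInt f a b.
Proof.
  intros Hf Hpos haA hAB hBb.
  assert (Ch : forall p q r, RInt f p q + RInt f q r = RInt f p r)
    by (intros; apply (@RInt_Chasles R_CompleteNormedModule); apply ex_RInt_cont, Hf).
  rewrite <- (Ch a A b), <- (Ch A B b).
  assert (0 <= RInt f a A) by (apply RInt_ge_0; auto; apply ex_RInt_cont, Hf).
  assert (0 <= RInt f B b) by (apply RInt_ge_0; auto; apply ex_RInt_cont, Hf).
  lra.
Qed.

Lemma RInt_window_le_periods (f : R -> R) (K S x : R) (N : nat) :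
  (forall y, continuous f y) -> periodic2pi f -> (forall y, 0 <= f y) ->
  RInt f (- PI) PI <= K -> 0 <= S -> 2 * S <= 2 * PI * INR N ->
  RInt f (x - S) (x + S) <= INR N * K.
Proof.
  intros Hf Hper Hpos HK hS hN.
  eapply Rle_trans;
    [apply (RInt_le_superinterval f (x - S) _ _ (x - S + 2 * PI * INR N)); auto; lra|].
  rewrite RInt_periods by auto. apply Rmult_le_compat_l; [apply pos_INR | exact HK].
Qed.

Lemma is_RInt_RInt (f : R -> R) (a b : R) :
  (forall x, continuous f x) -> is_RInt f a b (RInt f a b).
Proof. intros Hf. apply (@RInt_correct R_CompleteNormedModule), ex_RInt_cont, Hf. Qed.

Lemma RInt_plus_const (f : R -> R) (c a b : R) : (forall x, continuous f x) ->
  RInt (fun x => f x + c) a b = RInt f a b + (b - a) * c.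
Proof.
  intros Hf. apply (@is_RInt_unique R_CompleteNormedModule).
  exact (is_RInt_plus _ _ _ _ _ _ (is_RInt_RInt f a b Hf) (is_RInt_const a b c)).
Qed.

(* The transport terms are differences of translates of periodic functions, so they
   integrate to zero over a period. *)
Lemma RInt_periodic_flux (F A B : R -> R) (k c e : R) :
  (forall x, continuous F x) -> (forall x, continuous A x) -> (forall x, continuous B x) ->
  periodic2pi A -> periodic2pi B ->
  RInt (fun x => F x + k * (A (x - e) - A x) + k * (B (x + e) - B x) + c) (- PI) PI
  = RInt F (- PI) PI + 2 * PI * c.
Proof.
  intros HF HA HB pA pB.
  assert (cA : forall x, continuous (fun y => A (y + - e)) x) by (intros; solve_continuous).
  assert (cB : forall x, continuous (fun y => B (y + e)) x) by (intros; solve_continuous).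
  assert (IA : is_RInt (fun y => A (y + - e)) (- PI) PI (RInt A (- PI) PI)).
  { rewrite <- (RInt_comp_shift A HA pA (- e)). apply is_RInt_RInt, cA. }
  assert (IB : is_RInt (fun y => B (y + e)) (- PI) PI (RInt B (- PI) PI)).
  { rewrite <- (RInt_comp_shift B HB pB e). apply is_RInt_RInt, cB. }
  pose proof (is_RInt_scal _ _ _ k _ (is_RInt_minus _ _ _ _ _ _ IA (is_RInt_RInt A (- PI) PI HA)))
    as FA.
  pose proof (is_RInt_scal _ _ _ k _ (is_RInt_minus _ _ _ _ _ _ IB (is_RInt_RInt B (- PI) PI HB)))
    as FB.
  pose proof (is_RInt_plus _ _ _ _ _ _
    (is_RInt_plus _ _ _ _ _ _ (is_RInt_plus _ _ _ _ _ _ (is_RInt_RInt F (- PI) PI HF) FA) FB)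
    (is_RInt_const (- PI) PI c)) as I.
  apply (@is_RInt_unique R_CompleteNormedModule).
  match type of I with is_RInt _ _ _ ?v => replace (RInt F (- PI) PI + 2 * PI * c) with v end.
  - exact I.
  - unfold minus, plus, scal, opp, mult; simpl. unfold mult; simpl. lra.
Qed.

(** * The L1 norm over a period *)

(* For [h M <= eps] the Euler step is a combination of [xl], [x], [xr] with the nonnegative
   weights [k upos ul], [1 - k |u|], [k uneg ur], where [k = h / eps]. *)
Lemma abs_lattice_step_le (h eps xl x xr ul u ur M : R) :
  0 < eps -> 0 <= h -> h * M <= eps -> Rabs u <= M ->
  Rabs (x + h * (/ eps * (xl * upos ul - x * Rabs u + xr * uneg ur)))
  <= Rabs x + h / eps * (upos ul * Rabs xl - upos u * Rabs x)
            + h / eps * (uneg ur * Rabs xr - uneg u * Rabs x).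
Proof.
  intros heps hh hM hu.
  set (k := h / eps).
  assert (hk : 0 <= k) by (apply Rmult_le_pos; [lra | apply Rlt_le, Rinv_0_lt_compat, heps]).
  assert (hk1 : k * Rabs u <= 1).
  { apply Rmult_le_reg_l with eps; [exact heps|].
    replace (eps * (k * Rabs u)) with (h * Rabs u) by (unfold k; field; lra).
    assert (h * Rabs u <= h * M) by (apply Rmult_le_compat_l; lra). lra. }
  pose proof (upos_bounds ul). pose proof (uneg_bounds ur).
  replace (x + h * (/ eps * (xl * upos ul - x * Rabs u + xr * uneg ur)))
    with ((1 - k * Rabs u) * x + (k * upos ul) * xl + (k * uneg ur) * xr)
    by (unfold k; field; lra).
  eapply Rle_trans; [apply Rabs_triang|].
  eapply Rle_trans; [apply Rplus_le_compat_r, Rabs_triang|].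
  rewrite (Rabs_mult (1 - k * Rabs u)), (Rabs_mult (k * upos ul)), (Rabs_mult (k * uneg ur)).
  rewrite (Rabs_pos_eq (1 - k * Rabs u)), (Rabs_pos_eq (k * upos ul)),
    (Rabs_pos_eq (k * uneg ur)) by (try apply Rmult_le_pos; lra).
  fold k. rewrite <- (upos_add_uneg u). right. ring.
Qed.

Section Mass.

Variables (eps M1 : R) (u X : R -> R -> R).
Hypotheses (heps : 0 < eps) (hM1 : 0 < M1)
  (Huper : forall t, 0 <= t -> periodic2pi (fun x => u x t))
  (Hub : forall x t, 0 <= t -> Rabs (u x t) <= M1)
  (Hucont : forall t, 0 <= t -> forall x, continuous (fun y => u y t) x)
  (HXcont : forall t, 0 <= t -> forall x, continuous (fun y => X y t) x)
  (HXc : sup_continuous X) (HXd : sup_derivative X (rhs eps X u))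
  (HXper : forall t, 0 <= t -> periodic2pi (fun x => X x t)).

Let mass (t : R) : R := RInt (fun x => Rabs (X x t)) (- PI) PI.

Let mass_left (t : R) : 0 < t -> forall g, 0 < g -> exists delta, 0 < delta /\
  forall r, 0 <= r < t -> Rabs (r - t) < delta -> mass t <= mass r + g.
Proof.
  intros ht g hg. assert (hPI := PI_RGT_0).
  destruct (HXc t ltac:(lra) (g / (2 * PI)) ltac:(apply Rdiv_lt_0_compat; lra))
    as [delta [hdelta Hdelta]].
  exists delta. split; [exact hdelta|]. intros r Hr Hrt.
  assert (cXr := HXcont r ltac:(lra)). assert (cXt := HXcont t ltac:(lra)).
  unfold mass.
  replace g with ((PI - - PI) * (g / (2 * PI))) by (field; lra).
  rewrite <- RInt_plus_const by (intros; solve_continuous).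
  apply RInt_le; [lra | apply ex_RInt_cont; intros; solve_continuous
                 | apply ex_RInt_cont; intros; solve_continuous |].
  intros x _. pose proof (Hdelta r ltac:(lra) Hrt x).
  assert (Htri := Rabs_triang_inv (X x t) (X x r)). rewrite Rabs_minus_sym in Htri. lra.
Qed.

Let mass_step_le (t s eta : R) : 0 <= t <= s -> (s - t) * M1 <= eps ->
  (forall x, Rabs (X x s) <= Rabs (X x t + (s - t) * rhs eps X u x t) + (s - t) * eta) ->
  mass s <= mass t + 2 * PI * eta * (s - t).
Proof.
  intros hts hhM Hstep. set (h := s - t). fold h in hhM, Hstep.
  assert (ht : 0 <= t) by lra.
  assert (cU := Hucont t ht). assert (cX := HXcont t ht). assert (cXs := HXcont s ltac:(lra)).
  set (A := fun y => upos (u y t) * Rabs (X y t)).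
  set (B := fun y => uneg (u y t) * Rabs (X y t)).
  assert (cA : forall y, continuous A y) by (intros; unfold A; solve_continuous).
  assert (cB : forall y, continuous B y) by (intros; unfold B; solve_continuous).
  assert (pA : periodic2pi A).
  { intros y. unfold A. rewrite (HXper t ht y), (Huper t ht y). reflexivity. }
  assert (pB : periodic2pi B).
  { intros y. unfold B. rewrite (HXper t ht y), (Huper t ht y). reflexivity. }
  unfold mass. replace (2 * PI * eta * h) with (2 * PI * (eta * h)) by ring.
  rewrite <- (RInt_periodic_flux _ A B (h / eps) _ eps) by (auto; intros; solve_continuous).
  apply RInt_le; [pose proof PI_RGT_0; lra | apply ex_RInt_cont; intros; solve_continuous
                 | apply ex_RInt_cont; intros; solve_continuous |].
  intros x _. specialize (Hstep x). unfold rhs in Hstep.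
  pose proof (abs_lattice_step_le h eps (X (x - eps) t) (X x t) (X (x + eps) t)
                (u (x - eps) t) (u x t) (u (x + eps) t) M1
                heps ltac:(unfold h; lra) hhM (Hub x t ht)).
  unfold A, B. lra.
Qed.

Let mass_right_slope (t : R) : 0 <= t -> forall eta, 0 < eta -> exists d, 0 < d /\
  forall s, t < s < t + d -> mass s <= mass t + eta * (s - t).
Proof.
  intros ht eta heta. assert (hPI := PI_RGT_0).
  destruct (sup_derivative_euler X _ t (eta / (2 * PI)) HXd ht
              ltac:(apply Rdiv_lt_0_compat; lra)) as [d [hd Hd]].
  exists (Rmin d (eps / M1)). split; [apply Rmin_pos; [lra | apply Rdiv_lt_0_compat; lra]|].
  intros s Hs.
  assert (Rmin d (eps / M1) <= d) by apply Rmin_l.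
  assert (Rmin d (eps / M1) <= eps / M1) by apply Rmin_r.
  replace (eta * (s - t)) with (2 * PI * (eta / (2 * PI)) * (s - t)) by (field; lra).
  apply mass_step_le; [lra | | intros x; apply Hd; lra].
  apply Rle_trans with (eps / M1 * M1); [apply Rmult_le_compat_r; lra|].
  right. field. lra.
Qed.

Lemma mass_nonincreasing : forall t, 0 <= t -> mass t <= mass 0.
Proof.
  apply le_of_right_slopes; [lra | exact mass_left | exact mass_right_slope].
Qed.

End Mass.

Lemma solution_window_mass_le (eps M1 K S x t : R) (N : nat) (u X : R -> R -> R) :
  0 < eps -> 0 < M1 ->
  (forall t, 0 <= t -> periodic2pi (fun x => u x t)) -> sup_cont_Cb u ->
  (forall x t, 0 <= t -> Rabs (u x t) <= M1) ->
  sup_cont_Cb X -> sup_derivative X (rhs eps X u) -> periodic2pi (fun x => X x 0) ->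
  RInt (fun x => Rabs (X x 0)) (- PI) PI <= K ->
  0 <= S -> 2 * S <= 2 * PI * INR N -> 0 <= t ->
  RInt (fun y => Rabs (X y t)) (x - S) (x + S) <= INR N * K.
Proof.
  intros heps hM1 Huper [HuCb _] Hub [HXCb HXc] HXd HX0 HK hS hN ht.
  assert (Hucont : forall s, 0 <= s -> forall y, continuous (fun z => u z s) y)
    by (intros s hs; apply (HuCb s hs)).
  assert (HXcont : forall s, 0 <= s -> forall y, continuous (fun z => X z s) y)
    by (intros s hs; apply (HXCb s hs)).
  assert (HXper := solution_periodic eps M1 u X heps hM1 Huper Hub HXc HXd HX0).
  assert (cX := HXcont t ht).
  apply RInt_window_le_periods;
    [intros; solve_continuous | | intros; apply Rabs_pos | | exact hS | exact hN].
  - intros y. simpl. rewrite (HXper t ht). reflexivity.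
  - eapply Rle_trans; [| exact HK].
    exact (mass_nonincreasing eps M1 u X heps hM1 Huper Hub Hucont HXcont HXc HXd HXper t ht).
Qed.

(** * Convolution with a compactly supported kernel *)

Lemma is_RInt_vanishing (h : R -> R) (a b : R) :
  a <= b -> (forall y, a < y < b -> h y = 0) -> is_RInt h a b 0.
Proof.
  intros hab hz. apply (is_RInt_ext (fun _ => 0)).
  - rewrite Rmin_left, Rmax_right by exact hab. intros y Hy. symmetry. apply hz, Hy.
  - pose proof (@is_RInt_const R_NormedModule a b 0) as I.
    rewrite (scal_zero_r (V := R_NormedModule)) in I. exact I.
Qed.

Lemma RInt_gen_compact_support (h : R -> R) (a b : R) :
  a <= b -> ex_RInt h a b -> (forall y, y < a \/ b < y -> h y = 0) ->
  RInt_gen h (Rbar_locally m_infty) (Rbar_locally p_infty) = RInt h a b.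
Proof.
  intros hab hex hz.
  apply (@is_RInt_gen_unique R_CompleteNormedModule); [apply _ | apply _|].
  intros P HP.
  apply Filter_prod with (Q := fun a' => a' < a) (R := fun b' => b < b');
    [exists a; auto | exists b; auto|].
  intros a' b' ha hb. exists (RInt h a b). split; [| apply locally_singleton, HP].
  assert (Za : is_RInt h a' a 0) by (apply is_RInt_vanishing; [lra | intros; apply hz; lra]).
  assert (Zb : is_RInt h b b' 0) by (apply is_RInt_vanishing; [lra | intros; apply hz; lra]).
  pose proof (is_RInt_Chasles _ _ _ _ _ _
                (is_RInt_Chasles _ _ _ _ _ _ Za (RInt_correct _ _ _ hex)) Zb) as I.
  replace (RInt h a b) with (plus (plus 0 (RInt h a b)) 0)
    by (unfold plus; simpl; ring).
  exact I.
Qed.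

Lemma conv_compact_support (f g : R -> R) (S z a b : R) :
  0 <= S -> (forall y, continuous f y) -> (forall w, continuous g w) ->
  (forall w, S < Rabs w -> g w = 0) -> a <= z - S -> z + S <= b ->
  conv f g z = RInt (fun y => f y * g (z - y)) a b.
Proof.
  intros hS Hf Hg Hsupp ha hb. unfold conv.
  apply RInt_gen_compact_support; [lra | apply ex_RInt_cont; intros; solve_continuous |].
  intros y [hy | hy]; rewrite Hsupp; try ring.
  - apply Rlt_le_trans with (z - y); [lra | apply Rle_abs].
  - rewrite Rabs_minus_sym. apply Rlt_le_trans with (y - z); [lra | apply Rle_abs].
Qed.

Lemma abs_RInt_mul_le (f g : R -> R) (a b B : R) : a <= b ->
  (forall y, continuous f y) -> (forall y, continuous g y) -> (forall y, Rabs (g y) <= B) ->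
  Rabs (RInt (fun y => f y * g y) a b) <= B * RInt (fun y => Rabs (f y)) a b.
Proof.
  intros hab Hf Hg HB.
  eapply Rle_trans;
    [apply abs_RInt_le; [exact hab | apply ex_RInt_cont; intros; solve_continuous]|].
  apply Rle_trans with (RInt (fun y => B * Rabs (f y)) a b).
  - apply RInt_le; [exact hab | apply ex_RInt_cont; intros; solve_continuous
                   | apply ex_RInt_cont; intros; solve_continuous |].
    intros y _. rewrite Rabs_mult, Rmult_comm.
    apply Rmult_le_compat_r; [apply Rabs_pos | apply HB].
  - right. apply (@RInt_scal R_CompleteNormedModule). apply ex_RInt_cont. intros; solve_continuous.
Qed.

Lemma abs_conv_le (f g : R -> R) (S B x : R) :
  0 <= S -> (forall y, continuous f y) -> (forall w, continuous g w) ->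
  (forall w, S < Rabs w -> g w = 0) -> (forall w, Rabs (g w) <= B) ->
  Rabs (conv f g x) <= B * RInt (fun y => Rabs (f y)) (x - S) (x + S).
Proof.
  intros hS Hf Hg Hsupp HB.
  rewrite (conv_compact_support f g S x (x - S) (x + S)) by (auto; lra).
  apply abs_RInt_mul_le; [lra | exact Hf | intros; solve_continuous | intros; apply HB].
Qed.

(* For [|z - x| < 1] the convolution is an integral over one fixed interval, so it can be
   differentiated under the integral sign. *)
Lemma is_derive_conv (f g g' : R -> R) (S x : R) :
  0 <= S -> (forall y, continuous f y) ->
  (forall w, is_derive g w (g' w)) -> (forall w, continuous g' w) ->
  (forall w, S < Rabs w -> g w = 0) -> (forall w, S < Rabs w -> g' w = 0) ->
  is_derive (conv f g) x (conv f g' x).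
Proof.
  intros hS Hf Hg Hg' Hsupp Hsupp'.
  assert (cg : forall w, continuous g w)
    by (intros w; apply continuous_of_ex_derive; exists (g' w); apply Hg).
  assert (Hpar : forall y z, is_derive (fun z => f y * g (z - y)) z (f y * g' (z - y))).
  { intros y z. auto_derive; [exists (g' (z - y)); apply Hg |].
    change (fun x0 : R => g x0) with g.
    rewrite (is_derive_unique g _ _ (Hg (z + - y))), Rmult_1_l. reflexivity. }
  set (a := x - S - 1). set (b := x + S + 1).
  rewrite (conv_compact_support f g' S x a b) by (auto; unfold a, b; lra).
  apply (is_derive_ext_loc (fun z => RInt (fun y => f y * g (z - y)) a b)).
  { exists (mkposreal 1 Rlt_0_1). intros z Hz. change (Rabs (z - x) < 1) in Hz.
    apply Rabs_def2 in Hz. symmetry.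
    apply (conv_compact_support f g S); auto; unfold a, b; lra. }
  rewrite (RInt_ext _ (fun y => Derive (fun z => f y * g (z - y)) x))
    by (intros y _; symmetry; apply is_derive_unique, Hpar).
  apply (is_derive_RInt_param (fun z y => f y * g (z - y))).
  - exists (mkposreal 1 Rlt_0_1). intros z _ y _. eexists. apply Hpar.
  - intros y _. apply (continuity_2d_pt_ext (fun z v => f v * g' (z - v))).
    { intros z v. symmetry. apply is_derive_unique, Hpar. }
    apply continuity_2d_pt_mult.
    + apply (continuity_1d_2d_pt_comp f (fun _ v => v));
        [apply continuity_pt_of_continuous, Hf | apply continuity_2d_pt_id2].
    + apply (continuity_1d_2d_pt_comp g' (fun z v => z - v));
        [apply continuity_pt_of_continuous, Hg' |].
      apply continuity_2d_pt_minus; [apply continuity_2d_pt_id1 | apply continuity_2d_pt_id2].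
  - exists (mkposreal 1 Rlt_0_1). intros z _. apply ex_RInt_cont. intros; solve_continuous.
Qed.

Lemma Derive_compact_support (phi : R -> R) (S : R) :
  (forall y, S < Rabs y -> phi y = 0) -> forall y, S < Rabs y -> Derive phi y = 0.
Proof.
  intros Hsupp y hy. rewrite (Derive_ext_loc phi (fun _ => 0)); [apply Derive_const|].
  exists (mkposreal (Rabs y - S) ltac:(lra)). intros z Hz. change (Rabs (z - y) < Rabs y - S) in Hz.
  apply Hsupp. pose proof (Rabs_triang_inv y z). rewrite Rabs_minus_sym in Hz. lra.
Qed.

Lemma smooth_compact_bounds (phi : R -> R) (S : R) :
  0 <= S -> (forall y, ex_derive phi y) -> (forall y, continuous (Derive phi) y) ->
  (forall y, S < Rabs y -> phi y = 0) ->
  exists B, 0 <= B /\ (forall y, Rabs (phi y) <= B) /\ (forall y, Rabs (Derive phi y) <= B).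
Proof.
  intros hS Hphi Hphi' Hsupp.
  destruct (bounded_of_compact_support phi S hS) as [Bp HBp]; [| exact Hsupp |].
  { intros y. apply continuous_of_ex_derive, Hphi. }
  destruct (bounded_of_compact_support (Derive phi) S hS Hphi'
              (Derive_compact_support phi S Hsupp)) as [Bd HBd].
  exists (Rmax Bp Bd). split; [| split].
  - eapply Rle_trans; [apply (Rle_trans _ _ _ (Rabs_pos _) (HBp 0)) | apply Rmax_l].
  - intros y. eapply Rle_trans; [apply HBp | apply Rmax_l].
  - intros y. eapply Rle_trans; [apply HBd | apply Rmax_r].
Qed.

Section Mollifier.

Variables (phi : R -> R) (S d : R).
Hypotheses (hS : 0 <= S) (hd : 0 < d <= 1)
  (Hphi : forall y, ex_derive phi y) (Hphi' : forall y, continuous (Derive phi) y)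
  (Hsupp : forall y, S < Rabs y -> phi y = 0).

(* Since [d <= 1], the rescaled kernels keep their support inside [[-S, S]]. *)
Let mollif_compact_support (g : R -> R) :
  (forall y, S < Rabs y -> g y = 0) -> forall w, S < Rabs w -> mollif g d w = 0.
Proof.
  intros Hg w hw. unfold mollif. rewrite Hg; [ring|].
  unfold Rdiv. rewrite Rabs_mult, Rabs_inv, (Rabs_pos_eq d) by lra.
  apply Rlt_le_trans with (Rabs w); [exact hw|].
  rewrite <- (Rmult_1_r (Rabs w)) at 1. apply Rmult_le_compat_l; [apply Rabs_pos|].
  rewrite <- Rinv_1. apply Rinv_le_contravar; lra.
Qed.

Let abs_mollif_le (g : R -> R) (B : R) :
  (forall y, Rabs (g y) <= B) -> forall w, Rabs (mollif g d w) <= B / d.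
Proof.
  intros HB w. unfold mollif, Rdiv.
  rewrite Rabs_mult, Rabs_inv, (Rabs_pos_eq d), (Rmult_comm B) by lra.
  apply Rmult_le_compat_l; [apply Rlt_le, Rinv_0_lt_compat; lra | apply HB].
Qed.

Let continuous_mollif (g : R -> R) :
  (forall y, continuous g y) -> forall w, continuous (mollif g d) w.
Proof. intros Hg w. unfold mollif, Rdiv. solve_continuous. Qed.

Let is_derive_mollif (w : R) : is_derive (mollif phi d) w (/ d * mollif (Derive phi) d w).
Proof. unfold mollif. auto_derive; [apply Hphi|]. rewrite Rmult_1_l. reflexivity. Qed.

Lemma conv_mollif_bounds (f : R -> R) (Bp Bd x : R) :
  (forall y, continuous f y) ->
  (forall y, Rabs (phi y) <= Bp) -> (forall y, Rabs (Derive phi y) <= Bd) ->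
  let I := RInt (fun y => Rabs (f y)) (x - S) (x + S) in
  Rabs (conv f (mollif phi d) x) <= Bp / d * I /\
  ex_derive (conv f (mollif phi d)) x /\
  Rabs (Derive (conv f (mollif phi d)) x) <= Bd / (d * d) * I.
Proof.
  intros Hf HBp HBd I.
  assert (cphi : forall y, continuous phi y) by (intros; apply continuous_of_ex_derive, Hphi).
  set (dk := fun w => / d * mollif (Derive phi) d w).
  assert (cdk : forall w, continuous dk w).
  { intros w. unfold dk. solve_continuous. apply continuous_mollif, Hphi'. }
  assert (sdk : forall w, S < Rabs w -> dk w = 0).
  { intros w hw. unfold dk. rewrite mollif_compact_support; [ring | | exact hw].
    apply Derive_compact_support, Hsupp. }
  assert (bdk : forall w, Rabs (dk w) <= Bd / (d * d)).
  { intros w. unfold dk. rewrite Rabs_mult, Rabs_inv, (Rabs_pos_eq d) by lra.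
    replace (Bd / (d * d)) with (/ d * (Bd / d)) by (field; lra).
    apply Rmult_le_compat_l; [apply Rlt_le, Rinv_0_lt_compat; lra | apply abs_mollif_le, HBd]. }
  assert (Hder : is_derive (conv f (mollif phi d)) x (conv f dk x))
    by exact (is_derive_conv f _ dk S x hS Hf is_derive_mollif cdk
                (mollif_compact_support phi Hsupp) sdk).
  split; [| split].
  - exact (abs_conv_le f _ S (Bp / d) x hS Hf (continuous_mollif phi cphi)
             (mollif_compact_support phi Hsupp) (abs_mollif_le phi Bp HBp)).
  - exists (conv f dk x). exact Hder.
  - rewrite (is_derive_unique _ _ _ Hder).
    exact (abs_conv_le f dk S _ x hS Hf cdk sdk bdk).
Qed.

End Mollifier.

Lemma Rpower_in_unit (x a : R) : 0 < x < 1 -> 0 < a -> 0 < Rpower x a <= 1.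
Proof.
  intros hx ha. unfold Rpower. split; [apply exp_pos|].
  rewrite <- exp_0. apply Rlt_le, exp_increasing.
  assert (ln x < 0) by (rewrite <- ln_1; apply ln_increasing; lra). nra.
Qed.

Lemma div_mul_le (B B' I J c : R) :
  0 < c -> 0 <= B <= B' -> I <= J -> 0 <= J -> B / c * I <= B' * J / c.
Proof.
  intros hc hB hIJ hJ. unfold Rdiv.
  assert (0 < / c) by (apply Rinv_0_lt_compat, hc).
  apply Rle_trans with (B * / c * J); [apply Rmult_le_compat_l; nra|].
  replace (B' * J * / c) with (B' * / c * J) by ring.
  apply Rmult_le_compat_r; nra.
Qed.

Theorem mainTheorem2
  (u : R -> R -> R -> R) (v0 : R -> R -> R) (X : R -> R -> R -> R)
  (phi : R -> R) (alpha M1 : R) :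
  0 < M1 ->
  (forall eps, 0 < eps < 1 ->
     (forall t, 0 <= t -> periodic2pi (fun x => u eps x t)) /\
     sup_cont_Cb (u eps) /\
     (forall x t, 0 <= t -> Rabs (u eps x t) <= M1)) ->
  (forall eps, 0 < eps < 1 -> Cb (v0 eps) /\ periodic2pi (v0 eps)) ->
  (exists K, forall eps, 0 < eps < 1 ->
     RInt (fun x => Rabs (v0 eps x)) (- PI) PI <= K) ->
  (forall eps, 0 < eps < 1 ->
     sup_cont_Cb (X eps) /\
     sup_derivative (X eps) (rhs eps (X eps) (u eps)) /\
     (forall x, X eps x 0 = v0 eps x)) ->
  smooth phi ->
  (exists Rs, forall x, Rs < Rabs x -> phi x = 0) ->
  is_RInt_gen phi (Rbar_locally m_infty) (Rbar_locally p_infty) 1 ->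
  0 < alpha <= 1 ->
  exists M2, 0 < M2 /\
    forall eps, 0 < eps < 1 -> forall x t, 0 <= t ->
      let v := fun z => conv (fun y => X eps y t) (mollif phi (Rpower eps alpha)) z in
      Rabs (v x) <= M2 / Rpower eps alpha /\
      ex_derive v x /\
      Rabs (Derive v x) <= M2 / Rpower eps (2 * alpha).
Proof.
  intros hM1 Hu Hv0 [K HK] HX Hsmooth [Rs HRs] _ halpha.
  set (S := Rabs Rs). assert (hS : 0 <= S) by apply Rabs_pos.
  assert (Hsupp : forall y, S < Rabs y -> phi y = 0)
    by (intros y hy; apply HRs; pose proof (Rle_abs Rs); unfold S in hy; lra).
  assert (Hphi : forall y, ex_derive phi y) by exact (Hsmooth 1%nat).
  assert (Hphi' : forall y, continuous (Derive phi) y)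
    by (intros y; apply continuous_of_ex_derive, (Hsmooth 2%nat)).
  destruct (smooth_compact_bounds phi S hS Hphi Hphi' Hsupp) as [B [hB [HBp HBd]]].
  destruct (INR_archimed (2 * PI) (2 * S)) as [N HN]; [pose proof PI_RGT_0; lra|].
  set (K' := Rmax K 0).
  assert (hNK : 0 <= INR N * K') by (apply Rmult_le_pos; [apply pos_INR | apply Rmax_r]).
  exists ((B + 1) * (INR N * K' + 1)). split; [apply Rmult_lt_0_compat; lra|].
  intros eps heps x t ht v.
  destruct (Hu eps heps) as [Huper [Hucb Hub]]. destruct (HX eps heps) as [HXcb [HXd HX0]].
  assert (Hwindow : RInt (fun y => Rabs (X eps y t)) (x - S) (x + S) <= INR N * K').
  { apply (solution_window_mass_le eps M1 K' S x t N (u eps) (X eps)); auto; try lra.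
    - intros y. simpl. rewrite !HX0. apply (proj2 (Hv0 eps heps)).
    - rewrite (RInt_ext _ (fun y => Rabs (v0 eps y))) by (intros; rewrite HX0; reflexivity).
      eapply Rle_trans; [apply HK, heps | apply Rmax_l]. }
  destruct (Rpower_in_unit eps alpha heps ltac:(lra)) as [hd0 hd1].
  replace (Rpower eps (2 * alpha)) with (Rpower eps alpha * Rpower eps alpha)
    by (rewrite <- Rpower_plus; f_equal; ring).
  destruct (conv_mollif_bounds phi S (Rpower eps alpha) hS ltac:(lra) Hphi Hphi' Hsupp
              (fun y => X eps y t) B B x (proj1 (proj1 HXcb t ht)) HBp HBd) as [B1 [B2 B3]].
  split; [eapply Rle_trans; [exact B1 | apply div_mul_le; lra] | split; [exact B2 |]].
  eapply Rle_trans; [exact B3 | apply div_mul_le; try lra]. nra.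
Qed.
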